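(* Let $F$ be a field with $\operatorname{char}F\ne2$, let $a,b\in F$ with $E=F(\sqrt a,\sqrt b)$ satisfying $[E:F]=4$. Suppose there exist (in a fixed algebraic closure of $F$) a Galois extension $D^{a,b}$ of $F$ with $E\subseteq D^{a,b}$, $\operatorname{Gal}(D^{a,b}/F)\cong D$ and $\operatorname{Gal}(D^{a,b}/F(\sqrt{ab}))\cong C$, and a cyclic quartic extension $C^a$ of $F$ with $F(\sqrt a)\subseteq C^a$. Let $K$ be the composite $D^{a,b}C^a$. Then $K/F$ is Galois and $\operatorname{Gal}(K/F)\cong D\curlywedge C$.
   Context: $D$ is the dihedral group of order 8, $C$ the cyclic group of order 4. $D\curlywedge C$ is the pullback of a homomorphism $\lambda:D\to\mathbb Z/2\mathbb Z$ with kernel isomorphic to $\mathbb Z/2\times\mathbb Z/2$ and the nontrivial homomorphism $\eta:C\to\mathbb Z/2\mathbb Z$: $D\curlywedge C=\{(u,v)\in D\times C:\lambda(u)=\eta(v)\}$, of order 16. *)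

From HB Require Import structures.
From mathcomp Require Import all_boot all_order all_algebra all_fingroup all_solvable all_field.
Set Implicit Arguments. Unset Strict Implicit. Unset Printing Implicit Defensive.

(* D = dihedral group of order 8 : the type  'D_8  (solvable/extremal.v)
   C = cyclic group of order 4   : the additive group  'Z_4
   Z/2Z                           : the additive group  'Z_2
   Z/2 x Z/2                      : the external direct product 'Z_2 * 'Z_2 *)

Definition pullback (aT bT rT : finGroupType) (lam : aT -> rT) (eta : bT -> rT)
  : {set (aT * bT)%type} :=
  [set u : (aT * bT)%type | lam u.1 == eta u.2].

From HB Require Import structures.
From mathcomp Require Import all_boot all_order all_algebra all_fingroup all_solvable.
From mathcomp Require Import all_field.

(* Restricting to D^{a,b} and C^a embeds Gal(K/F) into Gal(D^{a,b}/F) x Gal(C^a/F),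
   with image in the pairs that act in the same way on sqrt a. As D_8 has no cyclic
   quotient of order 4, C^a is not contained in D^{a,b}; hence [K : F] = 16 and the
   image is this whole subgroup of index 2. It becomes the pullback for lam and eta once
   both Galois groups are identified with D and C so that lam and eta turn into the
   action on sqrt a: on the cyclic group Gal(C^a/F) any isomorphism does, as there is
   only one nontrivial character to Z/2; on Gal(D^{a,b}/F) the given isomorphism is
   corrected by an automorphism of D_8 fixing the rotations, since both characters are
   nontrivial on the rotation subgroup Gal(D^{a,b}/F(sqrt ab)) (lam because its kernel
   is a Klein four-group). *)

Set Implicit Arguments.
Unset Strict Implicit.
Unset Printing Implicit Defensive.

Import GRing.Theory.
Local Open Scope group_scope.

Lemma Z2_eq_nt (u v : 'Z_2) : u != 1 -> v != 1 -> u = v.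
Proof. by case: u => [[|[|]]] //= ? _; case: v => [[|[|]]] //= ? _; apply/val_inj. Qed.

Lemma Z2_mul_nt (u v w : 'Z_2) : u != 1 -> v != w -> u * v = w.
Proof.
by case: u => [[|[|]]] //= ? _; case: v => [[|[|]]] //= ?; case: w => [[|[|]]] //= ? _;
  apply/val_inj.
Qed.

Lemma exponent_Z2xZ2 : exponent [set: 'Z_2 * 'Z_2] %| 2.
Proof.
apply/exponentP => -[u v] _.
by case: u => [[|[|]]] //= ?; case: v => [[|[|]]] //= ?; apply/eqP.
Qed.

Lemma Z2_morphim_nt (gT : finGroupType) (G : {group gT}) (f : {morphism G >-> 'Z_2}) :
  f @* G != 1 -> f @* G = [set: 'Z_2].
Proof.
by move=> ntf; apply/eqP; rewrite eqEcard subsetT cardsT card_ord ltnNge -trivg_card_le1.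
Qed.

Lemma mulg_setD_index2 (gT : finGroupType) (G H : {group gT}) g h :
  H \subset G -> #|G : H| = 2 -> g \in G :\: H -> h \in G :\: H -> g * h \in H.
Proof.
move=> sHG iGH H'g H'h; have H'hV : h^-1 \in G :\: H by rewrite !inE !groupV in H'h *.
by rewrite -[h]invgK -mem_rcoset (rcoset_index2 sHG iGH H'hV).
Qed.

Section DihedralTwist.

Variables (gT : finGroupType) (G : {group gT}) (r : gT).
Hypotheses (Gr : r \in G) (iGR : #|G : <[r]>| = 2)
  (invR : {in <[r]> & G :\: <[r]>, forall z g, z ^ g = z^-1}).

Let sRG : <[r]> \subset G. Proof. by rewrite cycle_subG. Qed.

(* For t in <[r]>, the automorphism of the dihedral group G that fixes the rotations
   and maps each reflection g to t * g. *)
Definition twist (t g : gT) := if g \in <[r]> then g else t * g.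

Lemma twistM t : t \in <[r]> -> {in G &, {morph twist t : g h / g * h}}.
Proof.
move=> Rt g h Gg Gh; rewrite /twist.
have [Rg | R'g] := boolP (g \in <[r]>); have [Rh | R'h] := boolP (h \in <[r]>).
- by rewrite groupM.
- rewrite groupMl // (negPf R'h) mulgA.
  by rewrite (centsP (cycle_abelian r) t Rt g Rg) -mulgA.
- by rewrite groupMr // (negPf R'g) mulgA.
have R'Gg : g \in G :\: <[r]> by rewrite inE R'g.
have R'Gh : h \in G :\: <[r]> by rewrite inE R'h.
rewrite (mulg_setD_index2 sRG iGR R'Gg R'Gh).
by rewrite (conjgC t g) invR // -mulgA mulKg.
Qed.

Lemma twist_mem t g : t \in <[r]> -> g \in G -> twist t g \in G.
Proof.
by move=> Rt Gg; rewrite /twist; case: ifP => // _; rewrite groupM // (subsetP sRG).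
Qed.

Lemma twist_eq1 t g : t \in <[r]> -> twist t g = 1 -> g = 1.
Proof.
rewrite /twist => Rt; case: ifP => // R'g /eqP; rewrite -eq_invg_mul => /eqP tg.
by rewrite -tg groupV Rt in R'g.
Qed.

Lemma twisted_injm (hT : finGroupType) (phi : {morphism G >-> hT})
    (nu : {morphism [set: hT] >-> 'Z_2}) (mu : {morphism G >-> 'Z_2}) :
    'injm phi -> nu (phi r) != 1 -> mu r != 1 ->
  exists2 theta : {morphism G >-> hT}, 'injm theta & {in G, forall g, nu (theta g) = mu g}.
Proof.
move=> injphi nu_r mu_r.
have [y R'Gy] : exists y, y \in G :\: <[r]>.
  apply/set0Pn; rewrite setD_eq0; apply: contra_eqN iGR => sGR.
  by rewrite (_ : G = <[r]>%G) ?indexgg //; apply/val_inj/eqP; rewrite eqEsubset sGR.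
have Gy : y \in G by case/setDP: R'Gy.
have nu_mu_R : {in <[r]>, forall c, nu (phi c) = mu c}.
  move=> _ /cycleP[k ->].
  by rewrite !morphX ?inE // (Z2_eq_nt nu_r mu_r).
(* The two characters agree on <[r]>; t repairs their values on the coset of y. *)
pose t := if nu (phi y) == mu y then 1 else r.
have Rt : t \in <[r]> by rewrite /t; case: ifP; rewrite ?group1 ?cycle_id.
have Gt : t \in G by rewrite (subsetP sRG).
have thetaM : {in G &, {morph phi \o twist t : g h / g * h}}.
  by move=> g h Gg Gh /=; rewrite twistM // morphM ?twist_mem.
exists (Morphism thetaM).
  apply/subsetP => g Kg; have Gg := dom_ker Kg; have /eqP := mker Kg.
  by rewrite /= (morph_injm_eq1 injphi (twist_mem Rt Gg)) => /eqP/twist_eq1-> //; rewrite inE.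
move=> g Gg /=; rewrite /twist; case: ifPn => [/nu_mu_R // | R'g].
have R'Gg : g \in G :\: <[r]> by rewrite inE R'g.
have R'GyV : y^-1 \in G :\: <[r]> by rewrite !inE !groupV in R'Gy *.
have Rc := mulg_setD_index2 sRG iGR R'Gg R'GyV.
have Gc : g * y^-1 \in G by rewrite (subsetP sRG).
rewrite -(mulgVK y g); move: (g * y^-1) Rc Gc => c Rc Gc.
rewrite !morphM ?inE ?groupM // (nu_mu_R t Rt) (nu_mu_R c Rc).
rewrite mulgA (Zp_mulgC (mu t)) -mulgA; congr (_ * _).
rewrite /t; case: eqP => [-> | /eqP nu_y]; first by rewrite morph1 mul1g.
exact: Z2_mul_nt.
Qed.

End DihedralTwist.

Section Dihedral8.
Variables (gT : finGroupType) (G : {group gT}).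
Hypothesis isoG : G \isog [set: 'D_8].

Lemma dihedral8_rotation r : r \in G -> #[r] = 4 ->
  #|G : <[r]>| = 2 /\ {in <[r]> & G :\: <[r]>, forall z g, z ^ g = z^-1}.
Proof.
move=> Gr r4; have oG : #|G| = 8 by rewrite (card_isog isoG) (@card_dihedral 4 isT).
have iGR : #|G : <[r]>| = 2 by rewrite -divgS ?cycle_subG // oG -orderE r4.
have [[x y] genG _] := generators_2dihedral (n := 3) isT isoG.
have [[_ _ invX] _ _ _ [_ _ _ _ cycX]] := dihedral2_structure (n := 3) isT genG isoG.
by split=> //; rewrite (cycX _ (cycle_cyclic r)) ?cycle_subG.
Qed.

Lemma dihedral8_cyclic_image (rT : finGroupType) (phi : {morphism G >-> rT}) :
  cyclic (phi @* G) -> #|phi @* G| %| 2.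
Proof.
move=> cyc_phiG; rewrite -exponent_cyclic //.
have [[x y] genG _] := generators_2dihedral (n := 3) isT isoG.
have [_ [derG _ _ _] [_ Mho1G] _ _] := dihedral2_structure (n := 3) isT genG isoG.
have pG : 2.-group G by case/extremal_generators_facts: genG.
apply/exponentP => _ /morphimP[g _ Gg ->].
have G'g2 : g ^+ 2 \in G^`(1).
  by rewrite derG -(Mho1G 1%N) //; exact: (Mho_p_elt 1 Gg (mem_p_elt pG Gg)).
have : phi (g ^+ 2) \in (phi @* G)^`(1).
  by rewrite -morphim_der //; exact: mem_morphim (groupX 2 Gg) G'g2.
by rewrite (derG1P (cyclic_abelian cyc_phiG)) morphX // => /set1P.
Qed.

End Dihedral8.

Section Pullback.
Variables (aT bT rT : finGroupType).
Variables (lam : {morphism [set: aT] >-> rT}) (eta : {morphism [set: bT] >-> rT}).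

Lemma pullback_group_set : group_set (pullback lam eta).
Proof.
apply/group_setP; split=> [|[u1 v1] [u2 v2]]; first by rewrite inE /= !morph1.
by rewrite !inE /= => /eqP e1 /eqP e2; rewrite !morphM ?inE // e1 e2.
Qed.
Canonical pullback_group := group pullback_group_set.

Lemma isog_pullback (gT : finGroupType) (G : {group gT}) (phi1 : gT -> aT) (phi2 : gT -> bT) :
    {in G &, {morph phi1 : x y / x * y}} -> {in G &, {morph phi2 : x y / x * y}} ->
    {in G, forall x, phi1 x = 1 -> phi2 x = 1 -> x = 1} ->
    {in G, forall x, lam (phi1 x) = eta (phi2 x)} ->
    #|G| = #|pullback lam eta| ->
  G \isog pullback lam eta.
Proof.
move=> phi1M phi2M ker12 lam_eta oG.
have psiM : {in G &, {morph (fun x => (phi1 x, phi2 x)) : x y / x * y}}.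
  by move=> x y Gx Gy; rewrite phi1M ?phi2M.
have inj_psi : 'injm (Morphism psiM).
  apply/subsetP => x Kx; have [/= e1 e2] := mker Kx.
  by rewrite inE (ker12 x (dom_ker Kx) e1 e2).
apply/isogP; exists (Morphism psiM) => //; apply/eqP.
rewrite eqEcard card_injm // oG leqnn andbT.
by apply/subsetP => _ /morphimP[x _ Gx ->]; rewrite inE /= lam_eta.
Qed.

End Pullback.

Lemma card_pullback_Z2 (aT bT : finGroupType)
    (lam : {morphism [set: aT] >-> 'Z_2}) (eta : {morphism [set: bT] >-> 'Z_2}) :
  eta @* [set: bT] != 1 -> (#|pullback lam eta| * 2 = #|aT| * #|bT|)%N.
Proof.
move=> nt_eta; pose delta (u : aT * bT) := lam u.1 * (eta u.2)^-1.
have deltaM : {in [set: aT * bT] &, {morph delta : u v / u * v}}.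
  move=> [u1 v1] [u2 v2] _ _; rewrite /delta /= !morphM ?inE // invMg.
  rewrite (Zp_mulgC (eta v2)^-1) !mulgA; congr (_ * _).
  by rewrite -!mulgA; congr (_ * _); exact: Zp_mulgC.
pose dm := Morphism deltaM.
have ker_dm : 'ker dm = pullback lam eta.
  by apply/setP => -[u v]; rewrite !inE /= /delta -eq_mulgV1.
have im_dm : dm @* [set: aT * bT] = [set: 'Z_2].
  apply: (@Z2_morphim_nt _ _ dm); apply: contra nt_eta => /eqP im1.
  apply/eqP/trivgP/subsetP => _ /morphimP[v _ _ ->].
  have : dm (1, v^-1) \in dm @* [set: aT * bT] by rewrite mem_morphim ?inE.
  by rewrite im1 /= /delta morph1 ?inE // mul1g morphV ?inE // invgK.
have idx : #|[set: aT * bT] : 'ker dm| = 2%N.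
  by rewrite -{1}(setIid [set: aT * bT]) -card_morphim im_dm cardsT card_ord.
by rewrite -ker_dm -[X in (_ * X)%N]idx Lagrange ?subsetT // cardsT card_prod.
Qed.

Local Open Scope ring_scope.

Section FieldExt.
Variables (F : fieldType) (L : splittingFieldType F).
Implicit Types (K M D C E : {subfield L}) (x y s : L).

Lemma prodv_Fadjoin D M x : (M <= D)%VS -> (D * <<M; x>>)%VS = <<D; x>>%VS.
Proof.
move=> sMD; apply/eqP; rewrite eqEsubv; apply/andP; split.
  apply: prodv_sub; first exact: subv_adjoin.
  by apply/FadjoinP; rewrite memv_adjoin (subv_trans sMD) ?subv_adjoin.
apply/FadjoinP; rewrite field_subvMr (subvP (field_subvMl D _)) //.
exact: memv_adjoin.
Qed.

Lemma adjoin_deg_sqr K x : x ^+ 2 \in K -> (adjoin_degree K x <= 2)%N.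
Proof.
move=> x2K; pose p : {poly L} := 'X^2 - (x ^+ 2)%:P.
have szp : size p = 3%N by rewrite size_XnsubC.
have p0 : p != 0 by rewrite -size_poly_eq0 szp.
have pK : p \is a polyOver K by rewrite rpredB ?rpredX ?polyOverX ?polyOverC.
have rp : root p x by rewrite /root !hornerE subrr.
by have := dvdp_leq p0 (minPoly_dvdp pK rp); rewrite size_minPoly szp.
Qed.

Lemma adjoin_deg_biquadratic K x y :
  x ^+ 2 \in K -> y ^+ 2 \in <<K; x>>%VS -> \dim <<<<K; x>>; y>> = (4 * \dim K)%N ->
  adjoin_degree K x = 2%N.
Proof.
move=> /adjoin_deg_sqr le_x2 /adjoin_deg_sqr le_y2.
rewrite !dim_Fadjoin mulnA => /eqP; rewrite eqn_pmul2r ?adim_gt0 // => /eqP.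
move: le_x2 le_y2; case: (adjoin_degree K x) => [|[|[|]]] //;
  by case: (adjoin_degree _ y) => [|[|[|]]].
Qed.

Lemma dim_prodv_quadratic D C M :
    (M <= D)%VS -> (M <= C)%VS -> separable M C -> \dim C = (2 * \dim M)%N ->
  ~~ (C <= D)%VS -> \dim (D * C)%AS = (2 * \dim D)%N.
Proof.
move=> sMD sMC sepMC dimC C'D; set g := separable_generator M C.
have defC : (C : {vspace L}) = <<M; g>>%VS := eq_adjoin_separable_generator sepMC sMC.
rewrite /= defC prodv_Fadjoin // dim_Fadjoin; congr (_ * _)%N.
have degMg : adjoin_degree M g = 2%N.
  by apply/eqP; rewrite -(eqn_pmul2r (adim_gt0 M)) -dim_Fadjoin -defC dimC mulnC.
have : (adjoin_degree D g <= 2)%N.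
  rewrite -degMg -ltnS -!size_minPoly dvdp_leq ?minPolyS //.
  by rewrite monic_neq0 ?monic_minPoly.
have : adjoin_degree D g != 1%N.
  by rewrite adjoin_deg_eq1; apply: contra C'D => Dg; rewrite defC; apply/FadjoinP.
have : (0 < adjoin_degree D g)%N by [].
by case: (adjoin_degree D g) => [|[|[|]]].
Qed.

Lemma galois_prodv K D C : galois K D -> galois K C -> galois K (D * C)%AS.
Proof.
move=> /and3P[sKD sepKD nKD] /and3P[sKC sepKC nKC]; apply/and3P; split.
- exact: subv_trans sKD (field_subvMr D C).
- set g := separable_generator K C.
  have defC : (C : {vspace L}) = <<K; g>>%VS := eq_adjoin_separable_generator sepKC sKC.
  rewrite /= defC prodv_Fadjoin // (separable_trans sepKD) // -adjoin_separable_eq.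
  exact: separable_elementS sKD (separable_generatorP C K).
apply/forall_inP => f Kf.
by rewrite /= aimgM (eqP (forall_inP nKD f Kf)) (eqP (forall_inP nKC f Kf)).
Qed.

Lemma mem_gal_Fadjoin K E (x : gal_of E) s : (<<K; s>> <= E)%VS ->
  (x \in 'Gal(E / <<K; s>>)%g) = (x \in 'Gal(E / K)%g) && (x s == s).
Proof.
move=> sKsE; have [sKE Es] := FadjoinP sKsE.
have fix_s : (s \in fixedField [set x]) = (x s == s).
  apply/(fixedFieldP Es)/eqP => [-> // | xs _ /set1P-> //]; exact: set11.
rewrite -!sub1set !galois_connection // -fix_s; exact: (sameP FadjoinP andP).
Qed.

Lemma gal_prodv_eq1 D C (x : gal_of (D * C)%AS) :
  x \in 'Gal((D * C)%AS / D)%g -> x \in 'Gal((D * C)%AS / C)%g -> x = 1%g.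
Proof.
rewrite -!sub1set !galois_connection ?field_subvMr ?field_subvMl // => fixD fixC.
apply/eqP/gal_eqP => v DCv; rewrite gal_id.
by have [_ -> //] := mem_fixedFieldP (subvP (prodv_sub fixD fixC) v DCv); exact: set11.
Qed.

Definition gal_sgn E s (x : gal_of E) : 'Z_2 := if x s == s then 1%g else Zp1.

Lemma gal_sgn_eq1 E s (x : gal_of E) : (gal_sgn s x == 1%g) = (x s == s).
Proof. by rewrite /gal_sgn; case: (x s == s). Qed.

Lemma gal_sqrt_pm E s (x : gal_of E) : s ^+ 2 \in 1%VS -> x s = s \/ x s = - s.
Proof.
case/vlineP=> k s2k; have xk : x (k *: 1) = k *: 1 by rewrite linearZ /= rmorph1.
have : x s ^+ 2 = s ^+ 2 by rewrite s2k -xk -s2k rmorphXn.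
move/eqP; rewrite -subr_eq0 subr_sqr mulf_eq0 subr_eq0 addr_eq0.
by case/orP => /eqP; [left | right].
Qed.

Lemma gal_sgnM E s : s \in E -> s ^+ 2 \in 1%VS -> {morph @gal_sgn E s : x y / (x * y)%g}.
Proof.
move=> Es s2 x y; rewrite /gal_sgn galM //.
case: (gal_sqrt_pm x s2) => ->; first by rewrite eqxx mul1g.
have -> : y (- s) = - y s by rewrite raddfN.
case: (gal_sqrt_pm y s2) => ->; first by rewrite eqxx mulg1.
by rewrite opprK eqxx; case: (_ == _); apply/val_inj.
Qed.

Lemma gal_sgnX E s (x : gal_of E) n :
  s \in E -> s ^+ 2 \in 1%VS -> gal_sgn s (x ^+ n)%g = (gal_sgn s x ^+ n)%g.
Proof.
move=> Es s2; elim: n => [|n IHn]; first by rewrite !expg0 /gal_sgn gal_id eqxx.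
by rewrite !expgS gal_sgnM // IHn.
Qed.

Section Restriction.
Variables (E M : {subfield L}).
Hypotheses (galE : galois 1 E) (sME : (M <= E)%VS) (nM : normalField 1 M).
Let s1ME : (1 <= M <= E)%VS. Proof. by rewrite sub1v. Qed.

Lemma gal_restr_mem (x : gal_of E) :
  x \in 'Gal(E / 1)%g -> normalField_cast M x \in 'Gal(M / 1)%g.
Proof. by move=> Ex; rewrite -(normalField_img galE s1ME nM) mem_morphim. Qed.

Lemma gal_restr_morphM (rT : finGroupType) (theta : {morphism 'Gal(M / 1%AS)%G >-> rT}) :
  {in 'Gal(E / 1)%g &, {morph theta \o normalField_cast M : x y / (x * y)%g}}.
Proof.
by move=> x y Ex Ey /=; rewrite (normalField_castM s1ME nM) // morphM ?gal_restr_mem.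
Qed.

Lemma gal_restr_eq1 (x : gal_of E) :
  x \in 'Gal(E / 1)%g -> normalField_cast M x = 1%g -> x \in 'Gal(E / M)%g.
Proof. by move=> Ex x1; rewrite -(normalField_ker s1ME nM); apply/kerP. Qed.

Lemma gal_sgn_restr s (x : gal_of E) : s \in M -> x \in 'Gal(E / 1)%g ->
  gal_sgn s (normalField_cast M x) = gal_sgn s x.
Proof. by move=> Ms Ex; rewrite /gal_sgn (normalField_cast_eq s1ME nM). Qed.

End Restriction.

Lemma gal_cyclic_sgn_isom C s (bT : finGroupType) (eta : {morphism [set: bT] >-> 'Z_2}) :
    galois 1 C -> cyclic 'Gal(C / 1)%g -> s \in C -> s \notin 1%VS -> s ^+ 2 \in 1%VS ->
    ('Gal(C / 1) \isog [set: bT])%g -> (eta @* [set: bT] != 1)%g ->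
  exists2 theta : {morphism 'Gal(C / 1%AS)%G >-> bT},
    ('injm theta)%g & {in 'Gal(C / 1)%g, forall h, eta (theta h) = gal_sgn s h}.
Proof.
move=> galC cycG Cs s'F s2 isoG nt_eta; have [beta injb im_beta] := isogP isoG.
exists beta => //; have [h defG] := cyclicP cycG.
have Gh : h \in 'Gal(C / 1)%g by rewrite defG cycle_id.
have eta_h : eta (beta h) != 1%g.
  apply: contra nt_eta => /eqP eh; apply/eqP/trivgP/subsetP => _ /morphimP[v _ _ ->].
  have : v \in (beta @* <[h]>)%g by rewrite -defG im_beta inE.
  by rewrite morphim_cycle // => /cycleP[k ->]; rewrite morphX ?inE // eh expg1n.
have sgn_h : gal_sgn s h != 1%g.
  rewrite gal_sgn_eq1; apply: contra s'F => /eqP hs.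
  rewrite -(galois_fixedField galC); apply/fixedFieldP => // x.
  rewrite defG => /cycleP[k ->]; apply/eqP.
  by rewrite -gal_sgn_eq1 gal_sgnX // (eqP (_ : gal_sgn s h == 1%g)) ?expg1n ?gal_sgn_eq1 ?hs.
move=> x; rewrite defG => /cycleP[k ->].
by rewrite morphX // morphX ?inE // gal_sgnX // (Z2_eq_nt eta_h sgn_h).
Qed.

Lemma gal_cyclic_sub_dihedral8 D C :
    galois 1 D -> ('Gal(D / 1) \isog [set: 'D_8])%g -> (C <= D)%VS -> normalField 1 C ->
  cyclic 'Gal(C / 1)%g -> (#|'Gal(C / 1)%g| %| 2)%N.
Proof.
move=> galD isoG sCD nC; have s1CD : (1 <= C <= D)%VS by rewrite sub1v sCD.
rewrite -(normalField_img galD s1CD nC); exact: dihedral8_cyclic_image.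
Qed.

Lemma gal_dihedral8_sgn_isom D sa sb (lam : {morphism [set: 'D_8] >-> 'Z_2}) :
    galois 1 D -> (<<<<1; sa>>; sb>> <= D)%VS -> \dim <<<<1; sa>>; sb>> = 4%N ->
    sa \notin 1%VS -> sa ^+ 2 \in 1%VS ->
    ('Gal(D / 1) \isog [set: 'D_8])%g -> ('Gal(D / <<1; sa * sb>>) \isog [set: 'Z_4])%g ->
    ('ker lam \isog [set: 'Z_2 * 'Z_2])%g ->
  exists2 theta : {morphism 'Gal(D / 1%AS)%G >-> 'D_8},
    ('injm theta)%g & {in 'Gal(D / 1)%g, forall g, lam (theta g) = gal_sgn sa g}.
Proof.
move=> galD sED dimE sa'F sa2 isoG isoR ker_lam.
have sAD : (<<1; sa>> <= D)%VS := subv_trans (subv_adjoin _ _) sED.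
have [[_ Dsa] [_ Dsb]] := (FadjoinP sAD, FadjoinP sED).
have oG : #|'Gal(D / 1)%g| = 8%N by rewrite (card_isog isoG) (@card_dihedral 4 isT).
have dimD : \dim D = 8%N by have := galois_dim galD; rewrite dimv1 divn1 oG.
have /cyclicP[r defR] : cyclic 'Gal(D / <<1; sa * sb>>)%g.
  by rewrite (isog_cyclic isoR); apply/cyclicP; exists Zp1; exact: Zp_cycle.
have r4 : #[r]%g = 4%N by rewrite orderE -defR (card_isog isoR) cardsT card_ord.
have Rr : r \in 'Gal(D / <<1; sa * sb>>)%g by rewrite defR cycle_id.
have Gr : r \in 'Gal(D / 1)%g := subsetP (galS D (sub1v _)) r Rr.
have sgn_r : gal_sgn sa r != 1%g.
  (* r fixes sa * sb; fixing sa too, it would lie in Gal(D / F(sa, sb)), of order 2. *)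
  rewrite gal_sgn_eq1; apply/negP => /eqP rsa.
  have sa0 : sa != 0 by apply: contraNneq sa'F => ->; rewrite mem0v.
  have rsb : r sb = sb.
    apply: (mulfI sa0); rewrite -{1}rsa -rmorphM.
    by apply: fixed_gal Rr (memv_adjoin _ _); rewrite sub_adjoin1v rpredM.
  have : r \in 'Gal(D / <<<<1; sa>>; sb>>)%g by rewrite !mem_gal_Fadjoin // Gr rsa rsb !eqxx.
  by move/order_dvdG; rewrite -(galois_dim (galoisS _ galD)) ?sub1v //= dimD dimE r4.
have [f injf im_f] := isogP isoG.
have lam_r : lam (f r) != 1%g.
  apply/negP => /eqP lam_fr; have Kfr : f r \in 'ker lam by apply/kerP; rewrite ?inE.
  have := dvdn_exponent Kfr; rewrite (exponent_isog ker_lam) (order_injm injf Gr) r4.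
  by move/dvdn_trans/(_ exponent_Z2xZ2).
have [iGR invR] := dihedral8_rotation isoG Gr r4.
pose sgn := Morphism (in2W (gal_sgnM Dsa sa2)) : {morphism 'Gal(D / 1%AS)%G >-> 'Z_2}.
exact: (twisted_injm Gr iGR invR (mu := sgn) injf lam_r sgn_r).
Qed.

Lemma gal_prodv_isog_pullback D C s (aT bT : finGroupType)
    (thD : {morphism 'Gal(D / 1%AS)%G >-> aT}) (thC : {morphism 'Gal(C / 1%AS)%G >-> bT})
    (lam : {morphism [set: aT] >-> 'Z_2}) (eta : {morphism [set: bT] >-> 'Z_2}) :
    galois 1 D -> galois 1 C -> s \in D -> s \in C -> ('injm thD)%g -> ('injm thC)%g ->
    {in 'Gal(D / 1)%g, forall g, lam (thD g) = gal_sgn s g} ->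
    {in 'Gal(C / 1)%g, forall h, eta (thC h) = gal_sgn s h} ->
    #|'Gal((D * C)%AS / 1)%g| = #|pullback lam eta| ->
  ('Gal((D * C)%AS / 1) \isog pullback lam eta)%g.
Proof.
move=> galD galC Ds Cs injD injC lamD etaC.
have galK := galois_prodv galD galC.
have [[_ _ nD] [_ _ nC]] := (and3P galD, and3P galC).
have [sDK sCK] := (field_subvMr D C, field_subvMl D C).
apply: (isog_pullback (phi1 := thD \o normalField_cast D) (phi2 := thC \o normalField_cast C)).
- exact: (gal_restr_morphM galK sDK nD).
- exact: (gal_restr_morphM galK sCK nC).
- move=> x Kx /eqP; rewrite (morph_injm_eq1 injD) ?gal_restr_mem // => /eqP.
  move=> /(gal_restr_eq1 sDK nD Kx) xD /eqP.
  rewrite (morph_injm_eq1 injC) ?gal_restr_mem // => /eqP.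
  by move=> /(gal_restr_eq1 sCK nC Kx) xC; exact: gal_prodv_eq1.
move=> x Kx /=; rewrite lamD ?etaC ?gal_restr_mem //.
by rewrite (gal_sgn_restr sDK nD) ?(gal_sgn_restr sCK nC).
Qed.

End FieldExt.

Theorem proposition3p1
  (F : fieldType) (L : splittingFieldType F)
  (lam : {morphism [set: 'D_8] >-> 'Z_2})
  (eta : {morphism [set: 'Z_4] >-> 'Z_2})
  (a b : F) (sa sb : L)
  (Dab Ca : {subfield L}) :
  ~~ (2%N \in [pchar F]) ->
  sa ^+ 2 = a%:A -> sb ^+ 2 = b%:A ->
  \dim <<<<1%VS; sa>>; sb>>%VS = 4%N ->
  (* D^{a,b} *)
  galois 1%VS Dab ->
  (<<<<1%VS; sa>>; sb>> <= Dab)%VS ->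
  ('Gal(Dab / 1%VS) \isog [set: 'D_8])%g ->
  ('Gal(Dab / <<1%VS; sa * sb>>) \isog [set: 'Z_4])%g ->
  (* C^a *)
  galois 1%VS Ca ->
  cyclic 'Gal(Ca / 1%VS) ->
  \dim Ca = 4%N ->
  (<<1%VS; sa>> <= Ca)%VS ->
  (* lam : D -> Z/2 with kernel isomorphic to Z/2 x Z/2, eta : C -> Z/2 nontrivial *)
  ('ker lam \isog [set: ('Z_2 * 'Z_2)%type])%g ->
  (eta @* [set: 'Z_4] != 1)%g ->
  galois 1%VS (Dab * Ca)%AS /\
  ('Gal((Dab * Ca)%AS / 1%VS) \isog pullback lam eta)%g.
Proof.
move=> _ sa2 sb2 dimE galD sED isoD isoR galC cycC dimC sAC ker_lam nt_eta.
(* [dimv1] does not match [\dim 1%AS] syntactically. *)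
have dim1 : \dim (1%AS : {subfield L}) = 1%N := dimv1 L.
have sa2F : sa ^+ 2 \in 1%VS by rewrite sa2 rpredZ ?mem1v.
have sb2A : sb ^+ 2 \in <<1; sa>>%VS by rewrite sb2 rpredZ ?mem1v.
have degA : adjoin_degree 1 sa = 2%N.
  by apply: adjoin_deg_biquadratic sa2F sb2A _; rewrite dimE dim1.
have sa'F : sa \notin 1%VS by rewrite -adjoin_deg_eq1 degA.
have sAD : (<<1; sa>> <= Dab)%VS := subv_trans (subv_adjoin _ _) sED.
have [[_ Dsa] [_ Csa]] := (FadjoinP sAD, FadjoinP sAC).
have /and3P[_ sepC nC] := galC.
have dimD : (\dim Dab = 8)%N.
  by have := galois_dim galD; rewrite dim1 divn1 (card_isog isoD) (@card_dihedral 4 isT).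
have oGC : #|'Gal(Ca / 1)%g| = 4%N by have := galois_dim galC; rewrite dim1 divn1 dimC.
have isoC : ('Gal(Ca / 1) \isog [set: 'Z_4])%g.
  rewrite (isog_cyclic_card _ cycC) cardsT card_ord oGC eqxx andbT.
  by apply/cyclicP; exists Zp1; exact: Zp_cycle.
have C'D : ~~ (Ca <= Dab)%VS.
  by apply/negP => sCD; have := gal_cyclic_sub_dihedral8 galD isoD sCD nC cycC; rewrite oGC.
have dimK : \dim (Dab * Ca)%AS = 16%N.
  rewrite /= (dim_prodv_quadratic sAD sAC (separableSl (sub1v _) sepC) _ C'D) ?dimD //.
  by rewrite dimC dim_Fadjoin degA dim1.
have galK := galois_prodv galD galC; split=> //.
have [thD injD lamD] := gal_dihedral8_sgn_isom galD sED dimE sa'F sa2F isoD isoR ker_lam.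
have [thC injC etaC] := gal_cyclic_sgn_isom galC cycC Csa sa'F sa2F isoC nt_eta.
apply: (gal_prodv_isog_pullback galD galC Dsa Csa injD injC lamD etaC); apply/eqP.
rewrite -(eqn_pmul2r (isT : 0 < 2)%N) card_pullback_Z2 // -(galois_dim galK) dim1 divn1 dimK.
by rewrite -!cardsT (@card_dihedral 4 isT) cardsT card_ord.
Qed.
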